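(* Let $n,d\in\mathbb{Z}_+$, let $Q=(Q_{jk})_{j,k=0}^{n-1}$ be a real symmetric matrix, let $c\in\mathbb{R}$, and let $f:\mathbb{F}_2^n\to[-2^{d-1},2^{d-1})\cap\mathbb{Z}$ be given by $f(x)=c+\sum_{j,k=0}^{n-1}Q_{jk}x_jx_k$ (so $c=f(0)$). Set $q_j=\sum_{k}Q_{jk}$ and $q_\emptyset=f(0)+\tfrac14\mathrm{tr}(Q)+\tfrac14\mathrm{sum}(Q)$, where $\mathrm{sum}(Q)=\sum_{j,k}Q_{jk}$. Define the following unitaries on $n+d$ qubits (an $n$-qubit register holding $x=(x_0,\dots,x_{n-1})$ and a $d$-qubit register holding $y$): - $\tilde U_\emptyset=\mathbb{1}\otimes\mathcal{P}_d(q_\emptyset)$; - for $0\le j\le n-1$, $\tilde U_j$ = (controlled on qubit $x_j$, apply $X^{\otimes d}$ to the $y$-register), then $\mathcal{P}_d(-\tfrac{q_j}{2})$ on the $y$-register, then again (controlled on $x_j$, apply $X^{\otimes d}$ to the $y$-register); - for $0\le j<k\le n-1$, $\tilde U_{jk}$ = CNOT with control $x_j$ and target $x_k$, then (controlled on qubit $x_k$, apply $X^{\otimes d}$ to the $y$-register), then $\mathcal{P}_d(\tfrac{Q_{jk}}{2})$ on the $y$-register, then (controlled on $x_k$, apply $X^{\otimes d}$ to the $y$-register), then CNOT with control $x_j$ and target $x_k$. Let $\tilde U_{f,d}=\tilde U_\emptyset\circ\prod_{j=0}^{n-1}\tilde U_j\circ\prod_{j=0}^{n-2}\prod_{k=j+1}^{n-1}\tilde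 U_{jk}$. Then for every $x\in\mathbb{F}_2^n$ and every $y\in\mathbb{F}_2^d$ (identified with an integer mod $2^d$), $$\tilde U_{f,d}\ket{x}\ket{y}_d=\exp\!\Big(\tfrac{2\pi i}{2^d}f(x)\,y+i\alpha_{f,x}\Big)\ket{x}\ket{y}_d,\qquad \alpha_{f,x}=\tfrac{\pi(1-2^d)}{2^d}\big(f(x)-f(0)\big).$$ Consequently $U_{f,d}=(\mathbb{1}\otimes\mathrm{QFT}_d^\dagger)\circ\tilde U_{f,d}\circ(\mathbb{1}\otimes\mathrm{QFT}_d)$ satisfies $U_{f,d}\ket{x}\ket{y}_d=e^{i\alpha_{f,x}}\ket{x}\ket{y+f(x)}_d$ for all $x,y$, i.e. it is a projective quantum dictionary encoder for $f$ with garbage phases $\alpha_{f,x}$.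
   Context: Computational basis notation: for $x=(x_0,\dots,x_{n-1})\in\mathbb{F}_2^n$, $\ket{x}=\ket{x_0}\cdots\ket{x_{n-1}}$. For $\bar y\in\mathbb{Z}$ and $d\in\mathbb{Z}_+$, $\ket{\bar y}_d=\ket{y_0}\cdots\ket{y_{d-1}}$ where $(y_0,\dots,y_{d-1})\in\mathbb{F}_2^d$ satisfies $\bar y\equiv\sum_{j=0}^{d-1}y_j2^{d-1-j}\pmod{2^d}$; arithmetic inside $\ket{\cdot}_d$ is mod $2^d$. Note $X^{\otimes d}\ket{y}_d=\ket{-y-1}_d$. For $k\in\mathbb{R}$, $\mathcal{P}_d(k)=\bigotimes_{j=0}^{d-1}\mathrm{diag}(1,e^{\pi i k/2^j})$, equivalently $\mathcal{P}_d(k)\ket{y}_d=e^{2\pi i ky/2^d}\ket{y}_d$. $\mathrm{QFT}_d$ is the $d$-qubit quantum Fourier transform, $\mathrm{QFT}_d\ket{y}_d=2^{-d/2}\sum_{z=0}^{2^d-1}e^{2\pi i yz/2^d}\ket{z}_d$. A unitary $U_{f,d}$ on $n+d$ qubits is a projective quantum dictionary encoder for $f:\mathbb{F}_2^n\to\mathbb{Z}$ if $U_{f,d}\ket{x}\ket{y}_d=e^{i\alpha}\ket{x}\ket{y+f(x)}_d$ for all $x,y$, for some real phases $\alpha$ (the garbage phases). *)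

From HB Require Import structures.
From mathcomp Require Import all_boot all_order all_algebra.
From mathcomp Require Import complex.
From mathcomp Require Import reals trigo.

Set Implicit Arguments.
Unset Strict Implicit.
Unset Printing Implicit Defensive.

Import Order.TTheory GRing.Theory Num.Theory.
Local Open Scope ring_scope.
Local Open Scope complex_scope.

Section Quantum.
Variable R : realType.

Definition expi (t : R) : R[i] := Complex (cos t) (sin t).

Definition bits (k : nat) := {ffun 'I_k -> bool}.

Definition bits0 (k : nat) : bits k := [ffun => false].

Definition yval (d : nat) (y : bits d) : nat :=
  (\sum_(j < d) (y j : nat) * 2 ^ (d.-1 - j))%N.

(* |ybar>_d for ybar : int : the bit string of ybar mod 2^d (big endian) *)
Definition bits_of_int (d : nat) (z : int) : bits d :=
  [ffun j : 'I_d => odd (`|(z %% (2 ^ d)%:Z)%Z|%N %/ 2 ^ (d.-1 - j))].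

Definition basis (n d : nat) := (bits n * bits d)%type.

Definition state (n d : nat) := basis n d -> R[i].
Definition op (n d : nat) := state n d -> state n d.

Variables n d : nat.

Definition ket (x : bits n) (y : bits d) : state n d :=
  fun b => if b == (x, y) then 1 else 0.

Definition sscale (a : R[i]) (psi : state n d) : state n d := fun b => a * psi b.

(* linear operator with matrix (kernel) K : <b'|U|b> = K b' b *)
Definition op_of_kernel (K : basis n d -> basis n d -> R[i]) : op n d :=
  fun psi b' => \sum_(b : basis n d) K b' b * psi b.

Definition adjoint_kernel (K : basis n d -> basis n d -> R[i]) :=
  fun b' b => conjc (K b b').

Definition perm_op (sigma : basis n d -> basis n d) : op n d :=
  fun psi b' => \sum_(b : basis n d | sigma b == b') psi b.

Definition Pd (k : R) : op n d :=
  fun psi b => (\prod_(j < d) (if b.2 j then expi (pi * k / 2 ^+ j) else 1))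
               * psi b.

Definition cX (j : 'I_n) : op n d :=
  perm_op (fun b => (b.1, if b.1 j then [ffun i => ~~ b.2 i] else b.2)).

Definition CNOT (j k : 'I_n) : op n d :=
  perm_op (fun b => ([ffun i => if i == k then b.1 k (+) b.1 j else b.1 i], b.2)).

Definition QFT_kernel : basis n d -> basis n d -> R[i] :=
  fun b' b => if b'.1 == b.1 then
      ((Num.sqrt (2 ^+ d : R))^-1)%:C *
      expi (2 * pi * (yval b.2)%:R * (yval b'.2)%:R / 2 ^+ d)
    else 0.

Definition QFT : op n d := op_of_kernel QFT_kernel.
Definition QFTdag : op n d := op_of_kernel (adjoint_kernel QFT_kernel).

Definition compose_list (T : Type) (U : T -> op n d) (s : seq T) : op n d :=
  foldr (fun t acc => U t \o acc) id s.

Variables (Q : 'M[R]_n) (f : bits n -> int).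

Definition qj (j : 'I_n) : R := \sum_(k < n) Q j k.
Definition qempty : R :=
  (f (bits0 n))%:~R + \tr Q / 4 + (\sum_(j < n) \sum_(k < n) Q j k) / 4.

Definition Uempty : op n d := Pd qempty.
Definition Uj (j : 'I_n) : op n d := cX j \o Pd (- qj j / 2) \o cX j.
Definition Ujk (j k : 'I_n) : op n d :=
  CNOT j k \o cX k \o Pd (Q j k / 2) \o cX k \o CNOT j k.

Definition pairs_lt : seq ('I_n * 'I_n) :=
  [seq (j, k) | j : 'I_n <- enum 'I_n, k : 'I_n <- [seq k <- enum 'I_n | (nat_of_ord j < nat_of_ord k)%N]].

Definition Utilde : op n d :=
  Uempty \o compose_list Uj (enum 'I_n)
         \o compose_list (fun p => Ujk p.1 p.2) pairs_lt.

Definition Uencoder : op n d := QFTdag \o Utilde \o QFT.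

Definition alpha (x : bits n) : R :=
  pi * (1 - 2 ^+ d) / 2 ^+ d * ((f x)%:~R - (f (bits0 n))%:~R).

End Quantum.

Definition is_PQDE (R : realType) (n d : nat) (f : bits n -> int)
    (U : op R n d) : Prop :=
  exists alpha : bits n -> bits d -> R, forall (x : bits n) (y : bits d),
    U (ket R x y) =
      sscale (expi (alpha x y)) (ket R x (bits_of_int d ((yval y)%:Z + f x))).

From HB Require Import structures.
From mathcomp Require Import all_boot all_order all_algebra.
From mathcomp Require Import complex.
From mathcomp Require Import reals trigo.
From mathcomp Require Import ring zify.
From Stdlib Require Import FunctionalExtensionality.

Set Implicit Arguments.
Unset Strict Implicit.
Unset Printing Implicit Defensive.

Import Order.TTheory GRing.Theory Num.Theory.
Local Open Scope ring_scope.
Local Open Scope complex_scope.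

(* Every gate of U~_{f,d} is diagonal in the computational basis, so U~_{f,d}
   multiplies |x>|y>_d by a phase.  P_d(k) contributes e^{2 pi i k y / 2^d};
   conjugating it by a controlled X^{(x)d} replaces y by 2^d - 1 - y when the
   control bit is set, and conjugating further by CNOT(j,k) makes that control
   bit x_j xor x_k = x_j + x_k - 2 x_j x_k.  Summing the exponents, the terms
   linear in y add up to f(x) y, and the rest is alpha_{f,x}, because the
   symmetry of Q lets the sums over j < k be rewritten as full sums over j, k.
   Conjugating the resulting diagonal operator by the QFT on the y-register
   turns the phase e^{2 pi i f(x) y / 2^d} into the shift y |-> y + f(x): the
   sum over z of e^{2 pi i m z / 2^d} is 2^d if 2^d divides m and 0 otherwise,
   as it factors into prod_j (1 + e^{pi i m / 2^j}). *)

Section Phase.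
Variable R : realType.
Implicit Types a b : R.

Lemma expi0 : expi (0 : R) = 1.
Proof. by rewrite /expi cos0 sin0. Qed.

Lemma expiD a b : expi (a + b) = expi a * expi b.
Proof. by rewrite /expi cosD sinD; congr Complex; ring. Qed.

Lemma conj_expi a : conjc (expi a) = expi (- a).
Proof. by rewrite /expi cosN sinN. Qed.

Lemma conjcM (u v : R[i]) : conjc (u * v) = conjc u * conjc v.
Proof. exact: rmorphM. Qed.

Lemma expi_sum (I : Type) (s : seq I) (g : I -> R) :
  expi (\sum_(i <- s) g i) = \prod_(i <- s) expi (g i).
Proof. by elim: s => [|i s IH]; rewrite ?big_nil ?expi0 // !big_cons expiD IH. Qed.

Lemma expi_pi_nat (k : nat) : expi (pi * k%:R : R) = (-1) ^+ k.
Proof.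
elim: k => [|k IH]; first by rewrite mulr0 expi0.
rewrite -addn1 natrD mulrDr mulr1 expiD IH exprD expr1.
by congr (_ * _); apply/eqP; rewrite eq_complex /= cospi sinpi oppr0 !eqxx.
Qed.

Lemma expi_pi_int (m : int) : expi (pi * m%:~R : R) = (-1) ^+ `|m|%N.
Proof.
case: m => k; first exact: expi_pi_nat.
by rewrite NegzE intrN mulrN -conj_expi -pmulrn expi_pi_nat rmorph_sign abszN.
Qed.

Lemma prod_1_add_expi_pi (d : nat) (m : int) :
  \prod_(j < d) (1 + expi (pi * m%:~R / 2 ^+ j : R)) =
  if (2 ^ d %| `|m|)%N then 2 ^+ d else 0.
Proof.
elim: d m => [|d IH] m; first by rewrite big_ord0 dvd1n.
rewrite big_ord_recl expr0 divr1 expi_pi_int -signr_odd.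
have [m_odd|m_even] := boolP (odd `|m|).
  rewrite expr1 addrN mul0r; case: ifP => // m_div.
  have : (2 %| `|m|)%N by apply: dvdn_trans m_div; rewrite expnS dvdn_mulr.
  by rewrite dvdn2 m_odd.
have {m_even} m_even : (2 %| m)%Z by rewrite dvdzE dvdn2.
rewrite -(divzK m_even); set q := (m %/ 2)%Z.
have halve (j : 'I_d) : pi * (q * 2)%:~R / 2 ^+ bump 0 j = pi * q%:~R / 2 ^+ j :> R.
  by rewrite intrM /bump /= add1n exprSr; field; rewrite expf_neq0 // pnatr_eq0.
rewrite (eq_bigr _ (fun j _ => congr1 (fun a => 1 + expi a) (halve j))) IH.
rewrite abszM /= -[(1 + 1)%N]/2%N expnSr dvdn_pmul2r // exprSr.
by case: ifP; rewrite ?mulr0 // mulrC.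
Qed.
End Phase.

Lemma sum_odd_div_pow2 (d N : nat) : (N < 2 ^ d)%N ->
  (\sum_(j < d) odd (N %/ 2 ^ j) * 2 ^ j)%N = N.
Proof.
elim: d N => [|d IH] N N_lt; first by move: N_lt; rewrite big_ord0 expn0; case: N.
rewrite big_ord_recl expn0 divn1 muln1.
under eq_bigr => j _ do rewrite lift0 expnS divnMA mulnCA.
rewrite -big_distrr /= IH; last by rewrite ltn_divLR // -expnSr.
by rewrite divn2 -[in RHS](odd_double_half N) -muln2 mulnC.
Qed.

Section Registers.
Variable d : nat.
Implicit Types (y : bits d) (z : int).

Lemma pred_sub_rev_ord (j : 'I_d) : (d.-1 - rev_ord j)%N = j.
Proof. by have := ltn_ord j; rewrite /=; lia. Qed.

Lemma yval_compl y : ((yval [ffun i => ~~ y i] + yval y).+1 = 2 ^ d)%N.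
Proof.
rewrite -[RHS](prednK (expn_gt0 2 d)) predn_exp mul1n /yval -big_split /=.
rewrite (reindex_inj rev_ord_inj) /=; congr _.+1; apply: eq_bigr => j _.
by rewrite ffunE -mulnDl pred_sub_rev_ord; case: (y _); rewrite /= mul1n.
Qed.

Lemma yval_lt y : (yval y < 2 ^ d)%N.
Proof. by rewrite -(yval_compl y) ltnS leq_addl. Qed.

Lemma modz_pow2_ge0 z : 0 <= (z %% (2 ^ d)%:Z)%Z.
Proof. by rewrite modz_ge0 // eqz_nat expn_eq0. Qed.

Lemma abs_modz_pow2_lt z : (`|(z %% (2 ^ d)%:Z)%Z|%N < 2 ^ d)%N.
Proof. by rewrite -ltz_nat gez0_abs ?modz_pow2_ge0 // ltz_pmod // ltz_nat expn_gt0. Qed.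

Lemma yval_bits_of_int z : yval (bits_of_int d z) = `|(z %% (2 ^ d)%:Z)%Z|%N.
Proof.
rewrite -[RHS](sum_odd_div_pow2 (abs_modz_pow2_lt z)) /yval.
rewrite (reindex_inj rev_ord_inj) /=; apply: eq_bigr => j _.
by rewrite ffunE pred_sub_rev_ord.
Qed.

Lemma bits_of_int_yval y : bits_of_int d (yval y)%:Z = y.
Proof.
pose g (N : 'I_(2 ^ d)) : bits d := bits_of_int d N%:Z.
have modz_small_ord (N : 'I_(2 ^ d)) : (N%:Z %% (2 ^ d)%:Z)%Z = N.
  by rewrite modz_small // ltz_nat ltn_ord.
have g_inj : injective g.
  by move=> N1 N2 /(congr1 (@yval d)); rewrite !yval_bits_of_int !modz_small_ord => /val_inj.
have /codomP[N ->] : y \in codom g.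
  by apply: inj_card_onto; rewrite // card_ffun card_bool !card_ord.
by rewrite /g yval_bits_of_int modz_small_ord.
Qed.

Lemma yval_inj : injective (@yval d).
Proof. by move=> y w yw; rewrite -(bits_of_int_yval y) yw bits_of_int_yval. Qed.

Lemma eq_bits_of_int y z :
  (y == bits_of_int d z) = ((2 ^ d)%:Z %| z - (yval y)%:Z)%Z.
Proof.
rewrite -eqz_mod_dvd (@modz_small (yval y)%:Z) ?ltz_nat ?yval_lt //.
rewrite -(gez0_abs (modz_pow2_ge0 z)) eqz_nat eq_sym -yval_bits_of_int.
by apply/eqP/eqP => [->|/yval_inj].
Qed.

End Registers.

Section PhaseRegister.
Variables (R : realType) (d : nat).

Lemma yval_flip (c : bool) (y : bits d) :
  (yval (if c then [ffun i => ~~ y i] else y))%:R =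
  (yval y)%:R + c%:R * (2 ^+ d - 1 - 2 * (yval y)%:R) :> R.
Proof.
case: c; last by rewrite mul0r addr0.
have := congr1 (fun N => N%:R : R) (yval_compl y).
by rewrite -addn1 !natrD natrX /= => <-; ring.
Qed.

Lemma expi_yval (k : R) (y : bits d) :
  expi (2 * pi / 2 ^+ d * (k * (yval y)%:R)) =
  \prod_(j < d) (if y j then expi (pi * k / 2 ^+ j) else 1).
Proof.
have bit_phase (b : bool) (a : R) : (if b then expi a else 1) = expi (b%:R * a).
  by case: b; rewrite ?mul1r ?mul0r ?expi0.
under [RHS]eq_bigr => j _ do rewrite bit_phase.
rewrite -expi_sum; congr expi.
rewrite /yval natr_sum !mulr_sumr; apply: eq_bigr => j _.
have d_split : (2 : R) ^+ d = 2 ^+ (d.-1 - j) * 2 * 2 ^+ j.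
  by rewrite -exprSr -exprD; congr (_ ^+ _); have := ltn_ord j; lia.
by rewrite natrM natrX d_split; field; rewrite !expf_neq0 // pnatr_eq0.
Qed.

Lemma sum_expi_yval (m : int) :
  \sum_(z : bits d) expi (2 * pi / 2 ^+ d * (m%:~R * (yval z)%:R) : R) =
  if (2 ^ d %| `|m|)%N then 2 ^+ d else 0.
Proof.
under eq_bigr => z _ do rewrite expi_yval.
rewrite -(prod_1_add_expi_pi R).
transitivity (\prod_(j < d) \sum_(b : bool) (if b then expi (pi * m%:~R / 2 ^+ j : R) else 1)).
  by rewrite bigA_distr_bigA.
by apply: eq_bigr => j _; rewrite big_bool addrC.
Qed.

End PhaseRegister.

Section DiagonalOperators.
Variables (R : realType) (n d : nat).
Implicit Types (t : basis n d -> R[i]) (s : basis n d -> basis n d).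

Definition diagop t : op R n d := fun psi b => t b * psi b.

Lemma diagop_comp t1 t2 : diagop t1 \o diagop t2 = diagop (fun b => t1 b * t2 b).
Proof.
apply: functional_extensionality => psi; apply: functional_extensionality => b.
by rewrite /diagop /= mulrA.
Qed.

Lemma compose_list_diagop (I : eqType) (U : I -> op R n d)
    (g : I -> basis n d -> R[i]) (r : seq I) :
  {in r, forall i, U i = diagop (g i)} ->
  compose_list U r = diagop (fun b => \prod_(i <- r) g i b).
Proof.
elim: r => [_|i r IH U_diag] /=.
  apply: functional_extensionality => psi; apply: functional_extensionality => b.
  by rewrite /diagop big_nil mul1r.
rewrite U_diag ?mem_head // IH => [|j j_r]; last by rewrite U_diag // inE j_r orbT.
by rewrite diagop_comp; congr diagop; apply: functional_extensionality => b; rewrite big_cons.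
Qed.

Lemma diagop_ket t x y : diagop t (ket R x y) = sscale (t (x, y)) (ket R x y).
Proof.
apply: functional_extensionality => b; rewrite /diagop /sscale /ket.
by case: eqP => [->|]; rewrite ?mulr0.
Qed.

Lemma perm_op_involutive s (psi : state R n d) : involutive s -> perm_op s psi = psi \o s.
Proof.
move=> s_inv; apply: functional_extensionality => b'.
rewrite /perm_op (big_pred1 (s b')) // => b /=.
by apply/eqP/eqP => [<-|->]; rewrite s_inv.
Qed.

Lemma perm_op_conj_diagop s t :
  involutive s -> perm_op s \o diagop t \o perm_op s = diagop (t \o s) :> op R n d.
Proof.
move=> s_inv; apply: functional_extensionality => psi.
apply: functional_extensionality => b.
by rewrite /= !perm_op_involutive // /diagop /= s_inv.
Qed.

Lemma op_of_kernel_ket (K : basis n d -> basis n d -> R[i]) x y :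
  op_of_kernel K (ket R x y) = K^~ (x, y).
Proof.
apply: functional_extensionality => b'.
rewrite /op_of_kernel (bigD1 (x, y)) //= /ket eqxx mulr1 big1 ?addr0 //.
by move=> b /negbTE ->; rewrite mulr0.
Qed.

Definition ctrlX_map (j : 'I_n) (b : basis n d) : basis n d :=
  (b.1, if b.1 j then [ffun i => ~~ b.2 i] else b.2).

Definition cnot_map (j k : 'I_n) (b : basis n d) : basis n d :=
  ([ffun i => if i == k then b.1 k (+) b.1 j else b.1 i], b.2).

Lemma ctrlX_map_involutive j : involutive (ctrlX_map j).
Proof.
move=> [x y]; rewrite /ctrlX_map /=; case: (x j) => //.
by congr pair; apply/ffunP => i; rewrite !ffunE negbK.
Qed.

Lemma cnot_map_involutive j k : j != k -> involutive (cnot_map j k).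
Proof.
move=> jk [x y]; congr pair; apply/ffunP => i; rewrite !ffunE.
by case: eqP => [->|//]; rewrite eqxx (negbTE jk) -addbA addbb addbF.
Qed.

Lemma Pd_diagop (k : R) :
  Pd k = diagop (fun b => expi (2 * pi / 2 ^+ d * (k * (yval b.2)%:R))).
Proof.
apply: functional_extensionality => psi; apply: functional_extensionality => b.
by rewrite /Pd /diagop expi_yval.
Qed.

End DiagonalOperators.

Section FourierConjugation.
Variables (R : realType) (n d : nat).

Lemma sum_basis (V : nmodType) (g : basis n d -> V) :
  \sum_(b : basis n d) g b = \sum_(x : bits n) \sum_(z : bits d) g (x, z).
Proof. by rewrite pair_bigA; apply: eq_bigr => -[]. Qed.

Lemma QFT_kernel_eq (x : bits n) (z y : bits d) :
  QFT_kernel R (x, z) (x, y) =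
  ((Num.sqrt (2 ^+ d : R))^-1)%:C * expi (2 * pi * (yval y)%:R * (yval z)%:R / 2 ^+ d).
Proof. by rewrite /QFT_kernel /= eqxx. Qed.

Lemma QFT_kernel_neq (x' x : bits n) (z y : bits d) :
  x' != x -> QFT_kernel R (x', z) (x, y) = 0.
Proof. by rewrite /QFT_kernel /= => /negbTE ->. Qed.

Lemma inv_sqrt_pow2_sqr :
  ((Num.sqrt (2 ^+ d : R))^-1)%:C * ((Num.sqrt (2 ^+ d : R))^-1)%:C * 2 ^+ d = 1 :> R[i].
Proof.
have pow2_gt0 : (0 : R) < 2 ^+ d by rewrite exprn_gt0.
have -> : 2 ^+ d = (2 ^+ d : R)%:C by rewrite rmorphXn rmorph_nat.
by rewrite -!rmorphM -expr2 exprVn sqr_sqrtr ?ltW // mulVf ?gt_eqF.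
Qed.

Lemma QFT_conj_phase_ket (F : bits n -> int) (a : bits n -> R)
    (x : bits n) (y : bits d) :
  (@QFTdag R n d \o diagop (fun b : basis n d =>
     expi (2 * pi / 2 ^+ d * (F b.1)%:~R * (yval b.2)%:R + a b.1)) \o @QFT R n d) (ket R x y)
  = sscale (expi (a x)) (ket R x (bits_of_int d ((yval y)%:Z + F x))).
Proof.
rewrite /= /QFT op_of_kernel_ket; apply: functional_extensionality => -[x' w].
rewrite /QFTdag /op_of_kernel /diagop /adjoint_kernel /sscale /ket sum_basis.
rewrite (bigD1 x) //= [X in _ + X]big1 ?addr0 => [|a' a'x]; last first.
  by rewrite big1 // => z _; rewrite [QFT_kernel R _ (x, y)]QFT_kernel_neq // !mulr0.
have [->|x'x] := eqVneq x' x; last first.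
  rewrite xpair_eqE (negbTE x'x) mulr0 big1 // => z _.
  by rewrite QFT_kernel_neq 1?eq_sym // conjc0 mul0r.
set s := (Num.sqrt (2 ^+ d : R))^-1.
pose m : int := (yval y)%:Z + F x - (yval w)%:Z.
have term z : conjc (QFT_kernel R (x, z) (x, w)) *
    (expi (2 * pi / 2 ^+ d * (F x)%:~R * (yval z)%:R + a x) * QFT_kernel R (x, z) (x, y))
    = s%:C * s%:C * expi (a x) * expi (2 * pi / 2 ^+ d * (m%:~R * (yval z)%:R)).
  rewrite !QFT_kernel_eq -/s conjcM conj_expi conjc_real.
  rewrite [X in _ * X]mulrCA mulrACA -!expiD -[RHS]mulrA -expiD; congr (_ * expi _).
  by rewrite /m intrB intrD -!pmulrn; field; rewrite expf_neq0 // pnatr_eq0.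
rewrite (eq_bigr _ (fun z _ => term z)) -mulr_sumr sum_expi_yval.
rewrite xpair_eqE eqxx eq_bits_of_int dvdzE /=.
by case: ifP; rewrite ?mulr0 // mulrAC inv_sqrt_pow2_sqr mul1r mulr1.
Qed.

End FourierConjugation.

Lemma sum_sym_split (V : nmodType) (n : nat) (g : 'I_n -> 'I_n -> V) :
  (forall j k, g j k = g k j) ->
  \sum_(j < n) \sum_(k < n) g j k =
  \sum_(j < n) g j j + (\sum_(j < n) \sum_(k < n | (j < k)%N) g j k) *+ 2.
Proof.
move=> g_sym.
have split_entry (j k : 'I_n) : g j k =
    (if (j < k)%N then g j k else 0) + (if (k < j)%N then g k j else 0)
    + (if k == j then g j j else 0).
  case: ltngtP => [jk|kj|/val_inj->]; rewrite -?val_eqE ?eqxx ?addr0 ?add0r //=.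
    by rewrite (gtn_eqF jk) addr0.
  by rewrite (ltn_eqF kj) addr0 g_sym.
under eq_bigr => j _ do (under eq_bigr => k _ do rewrite split_entry; rewrite !big_split).
rewrite !big_split /= mulr2n [RHS]addrC; congr (_ + _ + _).
- by apply: eq_bigr => j _; rewrite -big_mkcond.
- by rewrite exchange_big /=; apply: eq_bigr => j _; rewrite -big_mkcond.
- by apply: eq_bigr => j _; rewrite -big_mkcond big_pred1_eq.
Qed.

Lemma sum_pairs_lt (V : nmodType) (n : nat) (h : 'I_n * 'I_n -> V) :
  \sum_(p <- pairs_lt n) h p = \sum_(j < n) \sum_(k < n | (j < k)%N) h (j, k).
Proof.
rewrite /pairs_lt big_allpairs_dep big_enum; apply: eq_bigr => j _.
by rewrite big_filter big_enum_cond.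
Qed.

Lemma mem_pairs_lt (n : nat) (p : 'I_n * 'I_n) : p \in pairs_lt n -> p.1 != p.2.
Proof.
case/allpairsPdep => j [k [_ + ->]]; rewrite mem_filter /= => /andP[jk _].
by rewrite neq_ltn jk.
Qed.

Lemma sum_mul_affine (R : comPzRingType) (I : Type) (r : seq I) (a c : I -> R)
    (k Y M : R) :
  \sum_(i <- r) a i * k * (Y + c i * M) =
  k * ((\sum_(i <- r) a i) * Y + (\sum_(i <- r) a i * c i) * M).
Proof. by rewrite mulrDr !mulr_suml !mulr_sumr -big_split; apply: eq_bigr => i _ /=; ring. Qed.

Section Circuit.
Variables (R : realType) (n d : nat) (Q : 'M[R]_n) (f : bits n -> int).

Definition ctrl_compl_val (c : bool) (y : bits d) : R :=
  (yval y)%:R + c%:R * (2 ^+ d - 1 - 2 * (yval y)%:R).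

Definition ctrl_compl_phase (k : R) (c : bool) (y : bits d) : R[i] :=
  expi (2 * pi / 2 ^+ d * (k * ctrl_compl_val c y)).

Lemma Uj_diagop (j : 'I_n) :
  Uj Q j = diagop (fun b : basis n d => ctrl_compl_phase (- qj Q j / 2) (b.1 j) b.2).
Proof.
rewrite /Uj Pd_diagop (perm_op_conj_diagop _ (@ctrlX_map_involutive n d j)).
congr diagop; apply: functional_extensionality => b.
by rewrite /= yval_flip.
Qed.

Lemma Ujk_diagop (j k : 'I_n) : j != k ->
  Ujk Q j k =
  diagop (fun b : basis n d => ctrl_compl_phase (Q j k / 2) (b.1 k (+) b.1 j) b.2).
Proof.
move=> jk; rewrite /Ujk.
have -> : forall A B : op R n d,
    CNOT j k \o A \o B \o A \o CNOT j k = CNOT j k \o (A \o B \o A) \o CNOT j k by [].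
rewrite Pd_diagop (perm_op_conj_diagop _ (@ctrlX_map_involutive n d k)).
rewrite (perm_op_conj_diagop _ (@cnot_map_involutive n d j k jk)).
congr diagop; apply: functional_extensionality => b.
by rewrite /= yval_flip ffunE eqxx.
Qed.

Definition utilde_angle (b : basis n d) : R :=
  qempty Q f * (yval b.2)%:R
  + \sum_(j < n) (- qj Q j / 2) * ctrl_compl_val (b.1 j) b.2
  + \sum_(p <- pairs_lt n) Q p.1 p.2 / 2 * ctrl_compl_val (b.1 p.2 (+) b.1 p.1) b.2.

Lemma Utilde_diagop :
  Utilde Q f = diagop (fun b : basis n d => expi (2 * pi / 2 ^+ d * utilde_angle b)).
Proof.
rewrite /Utilde /Uempty Pd_diagop.
rewrite (compose_list_diagop (g := fun j (b : basis n d) =>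
    ctrl_compl_phase (- qj Q j / 2) (b.1 j) b.2)); last by move=> j _; rewrite Uj_diagop.
rewrite (compose_list_diagop (g := fun p (b : basis n d) =>
    ctrl_compl_phase (Q p.1 p.2 / 2) (b.1 p.2 (+) b.1 p.1) b.2)); last first.
  by move=> p /mem_pairs_lt; apply: Ujk_diagop.
rewrite !diagop_comp; congr diagop; apply: functional_extensionality => b.
by rewrite /ctrl_compl_phase -!expi_sum -!expiD /utilde_angle !mulrDr !mulr_sumr big_enum.
Qed.

Variable c : R.
Hypothesis Q_sym : Q^T = Q.
Hypothesis f_quadratic : forall x : bits n,
  (f x)%:~R = c + \sum_(j < n) \sum_(k < n) Q j k * (x j)%:R * (x k)%:R.

Lemma Q_entry_sym j k : Q j k = Q k j.
Proof. by rewrite -[in LHS]Q_sym mxE. Qed.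

Lemma sum_lt_entries :
  (\sum_(j < n) \sum_(k < n | (j < k)%N) Q j k) *+ 2 = \sum_(j < n) qj Q j - \tr Q.
Proof. by rewrite /qj (sum_sym_split Q_entry_sym) /mxtrace addrC addKr. Qed.

Lemma sum_lt_entries_xor (x : bits n) :
  \sum_(j < n) \sum_(k < n | (j < k)%N) Q j k * (x k (+) x j)%:R =
  \sum_(j < n) qj Q j * (x j)%:R - \sum_(j < n) \sum_(k < n) Q j k * (x j)%:R * (x k)%:R.
Proof.
apply: (@mulfI _ 2); first by rewrite pnatr_eq0.
rewrite !mulr_natl.
have diag0 : \sum_(j < n) Q j j * (x j (+) x j)%:R = 0.
  by rewrite big1 // => j _; rewrite addbb mulr0.
have sym j k : Q j k * (x k (+) x j)%:R = Q k j * (x j (+) x k)%:R.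
  by rewrite Q_entry_sym addbC.
have := sum_sym_split sym; rewrite /= diag0 add0r => <-.
have row_sum : \sum_(j < n) \sum_(k < n) Q j k * (x j)%:R = \sum_(j < n) qj Q j * (x j)%:R.
  by apply: eq_bigr => j _; rewrite /qj mulr_suml.
have col_sum : \sum_(j < n) \sum_(k < n) Q j k * (x k)%:R = \sum_(j < n) qj Q j * (x j)%:R.
  rewrite exchange_big /=; apply: eq_bigr => k _; rewrite /qj mulr_suml.
  by apply: eq_bigr => j _; rewrite Q_entry_sym.
have xor_entry (j k : 'I_n) : Q j k * (x k (+) x j)%:R =
    Q j k * (x j)%:R + Q j k * (x k)%:R - (Q j k * (x j)%:R * (x k)%:R) *+ 2.
  by case: (x j); case: (x k) => /=; ring.
under eq_bigr => j _ do rewrite (eq_bigr _ (fun k _ => xor_entry j k)) sumrB big_split sumrMnl.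
by rewrite sumrB big_split sumrMnl /= row_sum col_sum mulrnBl mulr2n.
Qed.

Lemma utilde_angle_val (x : bits n) (y : bits d) :
  utilde_angle (x, y) =
  (f x)%:~R * (yval y)%:R + (1 - 2 ^+ d) / 2 * ((f x)%:~R - (f (bits0 n))%:~R).
Proof.
have f0 : (f (bits0 n))%:~R = c.
  by rewrite f_quadratic big1 ?addr0 // => j _; rewrite big1 // => k _; rewrite !ffunE !mulr0.
have pairs_sum :
    \sum_(j < n) \sum_(k < n | (j < k)%N) Q j k = (\sum_(j < n) qj Q j - \tr Q) / 2.
  by rewrite -sum_lt_entries mulr2n; field.
have qj_sum : \sum_(j < n) - qj Q j * (x j)%:R = - \sum_(j < n) qj Q j * (x j)%:R.
  by rewrite -sumrN; apply: eq_bigr => j _; rewrite mulNr.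
rewrite /utilde_angle /ctrl_compl_val /= !sum_mul_affine !sum_pairs_lt /=.
rewrite sumrN qj_sum pairs_sum sum_lt_entries_xor /qempty f0 f_quadratic.
rewrite -[\sum_(j < n) \sum_(k < n) Q j k]/(\sum_(j < n) qj Q j).
by field.
Qed.

Lemma Utilde_phase :
  Utilde Q f = diagop (fun b : basis n d =>
    expi (2 * pi / 2 ^+ d * (f b.1)%:~R * (yval b.2)%:R + alpha R d f b.1)).
Proof.
rewrite Utilde_diagop; congr diagop; apply: functional_extensionality => -[x y].
by rewrite utilde_angle_val /alpha; congr expi; field; rewrite expf_neq0 // pnatr_eq0.
Qed.

End Circuit.

Theorem mainTheorem1 (R : realType) (n d : nat) (Q : 'M[R]_n) (c : R)
    (f : bits n -> int)
    (hn : (0 < n)%N) (hd : (0 < d)%N)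
    (hQsym : Q^T = Q)
    (hrange : forall x : bits n,
        - (2 ^ d.-1)%:Z <= f x /\ f x < (2 ^ d.-1)%:Z)
    (hf : forall x : bits n,
        (f x)%:~R = c + \sum_(j < n) \sum_(k < n) Q j k * (x j)%:R * (x k)%:R) :
  (forall (x : bits n) (y : bits d),
      @Utilde R n d Q f (ket R x y) =
      sscale (expi (2 * pi / 2 ^+ d * (f x)%:~R * (yval y)%:R + alpha R d f x))
             (ket R x y)) /\
  (forall (x : bits n) (y : bits d),
      @Uencoder R n d Q f (ket R x y) =
      sscale (expi (alpha R d f x))
             (ket R x (bits_of_int d ((yval y)%:Z + f x)))) /\
  is_PQDE f (@Uencoder R n d Q f).
Proof.
have Utilde_eq := Utilde_phase d hQsym hf.
have encoder_ket x y : @Uencoder R n d Q f (ket R x y) =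
    sscale (expi (alpha R d f x)) (ket R x (bits_of_int d ((yval y)%:Z + f x))).
  by rewrite /Uencoder Utilde_eq QFT_conj_phase_ket.
split; first by move=> x y; rewrite Utilde_eq diagop_ket.
by split=> //; exists (fun x _ => alpha R d f x).
Qed.
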